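(* In an instance of the large-market pricing problem described in the context, let $\vec x^1,\vec x^2$ be buyer demand vectors with $\vec x^2\ge\vec x^1$ componentwise, and let $\vec z^1,\vec z^2$ be min-cost flows for $\vec x^1,\vec x^2$ respectively. Then $$\sum_t\left(C_t(z^2_t)-C_t(z^1_t)\right)\ge\sum_i r_i(\vec z^1)\,(x^2_i-x^1_i).$$
   Context: Finite item set $S$, finite set $B$ of buyer types, bipartite graph $G=(B\cup S,E)$, $S_i=\{t:(i,t)\in E\}$. Item $t$ has convex continuously differentiable production cost $C_t$ with derivative $c_t$. A feasible allocation for demand vector $\vec x$ (indexed by $B$, nonnegative) is $z_t(i)\ge0$ with $z_t(i)>0$ only if $(i,t)\in E$ and $\sum_tz_t(i)=x_i$; $z_t=\sum_iz_t(i)$. A min-cost flow for $\vec x$ is a feasible allocation minimizing $\sum_tC_t(z_t)$. For a min-cost flow $\vec z$, $r_i(\vec z)=\min_{(i,t)\in E}c_t(z_t)$, which equals the marginal cost of every item buyer type $i$ receives in $\vec z$. *)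

From HB Require Import structures.
From mathcomp Require Import all_boot all_order all_algebra.
From mathcomp Require Import all_classical all_reals all_analysis.
Set Implicit Arguments. Unset Strict Implicit. Unset Printing Implicit Defensive.
Import Order.TTheory GRing.Theory Num.Theory.
Import numFieldNormedType.Exports.
Local Open Scope ring_scope.
Local Open Scope classical_set_scope.

Section Market.
Variables (R : realType) (B S : finType).

Definition convex_nonneg (f : R -> R) : Prop :=
  forall x y l : R, 0 <= x -> 0 <= y -> 0 <= l -> l <= 1 ->
    f (l * x + (1 - l) * y) <= l * f x + (1 - l) * f y.

(* f : [0,+oo) -> R is continuously differentiable with derivative df:
   f and df are continuous on [0,+oo), and df is the derivative of f at
   every interior point x > 0 (hence df 0 is the right derivative at 0). *)
Definition C1_nonneg_with_deriv (f df : R -> R) : Prop :=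
  {within [set x : R | 0 <= x], continuous f} /\
  {within [set x : R | 0 <= x], continuous df} /\
  (forall x : R, 0 < x -> is_derive x 1 f (df x)).

(* An allocation z i t : amount of item t given to buyer type i. *)
Definition feasible (E : B -> S -> bool) (x : B -> R) (z : B -> S -> R) : Prop :=
  (forall i t, 0 <= z i t) /\
  (forall i t, ~~ E i t -> z i t = 0) /\
  (forall i, \sum_(t : S) z i t = x i).

Definition load (z : B -> S -> R) (t : S) : R := \sum_(i : B) z i t.

Definition total_cost (C : S -> R -> R) (z : B -> S -> R) : R :=
  \sum_(t : S) C t (load z t).

Definition min_cost_flow (E : B -> S -> bool) (C : S -> R -> R)
    (x : B -> R) (z : B -> S -> R) : Prop :=
  feasible E x z /\
  forall z', feasible E x z' -> total_cost C z <= total_cost C z'.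

(* r_i(z) = min_{(i,t) in E} c_t(z_t); by convention 0 when buyer type i
   has no incident edge (then x_i = 0 for every feasible demand). *)
Definition rprice (E : B -> S -> bool) (c : S -> R -> R) (z : B -> S -> R)
    (i : B) : R :=
  if [pick t | E i t] is Some t0 then
    \big[Num.min/ c t0 (load z t0)]_(t | E i t) c t (load z t)
  else 0.

End Market.

(** Convexity gives C_t(z2_t) - C_t(z1_t) >= c_t(z1_t) (z2_t - z1_t) for every
    item. Splitting each load by buyer types turns the sum of the right-hand
    sides into sum_i sum_t c_t(z1_t) (z2_i,t - z1_i,t). Optimality of z1 forces
    every item a buyer type receives in z1 to have the least marginal cost
    r_i among its neighbours: otherwise shifting a little of that flow to a
    cheaper neighbour lowers the cost. Hence c_t(z1_t) z1_i,t = r_i z1_i,t and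
    c_t(z1_t) z2_i,t >= r_i z2_i,t, so the inner sum is at least
    r_i (x2_i - x1_i). *)

From HB Require Import structures.
From mathcomp Require Import all_boot all_order all_algebra.
From mathcomp Require Import all_classical all_reals all_analysis.
From mathcomp Require Import ring lra.
Set Implicit Arguments.
Unset Strict Implicit.
Unset Printing Implicit Defensive.
Import Order.TTheory GRing.Theory Num.Theory.
Import numFieldNormedType.Exports.
Local Open Scope ring_scope.
Local Open Scope classical_set_scope.

Lemma within_continuous_dist_lt (R : realType) (f : R -> R) (A : set R) (x e : R) :
  {within A, continuous f} -> A x -> 0 < e ->
  exists2 d, 0 < d & forall y, A y -> `|y - x| < d -> `|f y - f x| < e.
Proof.
move=> /subspace_continuousP fA Ax e0.
have := fA x Ax => /cvgr_dist_lt /(_ e e0).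
rewrite /prop_near1 /within /= => /nbhs_ballP[d /= d0 hd].
exists d => // y Ay xy; rewrite distrC; apply: hd => //.
by rewrite -ball_normE /= distrC.
Qed.

Section ConvexC1.
Variables (R : realType) (f df : R -> R).
Hypotheses (f_convex : convex_nonneg f) (f_C1 : C1_nonneg_with_deriv f df).

Lemma MVT_nonneg (a b : R) : 0 <= a -> 0 <= b -> a != b ->
  exists c, [/\ 0 <= c, `|c - a| < `|b - a| & f b - f a = df c * (b - a)].
Proof.
have [fc [_ f'] ] := f_C1.
have mvt u v : 0 <= u -> u < v ->
    exists2 c, u < c < v & f v - f u = df c * (v - u).
  move=> u0 uv; have [||c] := @MVT R f df u v uv.
  - by move=> y; rewrite in_itv /= => /andP[uy _]; apply: f'; exact: le_lt_trans uy.
  - apply: continuous_subspaceW fc => y /=; rewrite in_itv /= => /andP[uy _].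
    exact: le_trans uy.
  - by rewrite in_itv /= => cuv ->; exists c.
move=> a0 b0; case: ltgtP => // [ab|ba] _.
- have [c /andP[ac cb] ->] := mvt a b a0 ab.
  exists c; split => //; first exact: le_trans (ltW ac).
  by rewrite !gtr0_norm ?subr_gt0 // ltrD2r.
- have [c /andP[bc ca] fba] := mvt b a b0 ba.
  exists c; split; first exact: le_trans (ltW bc).
  - by rewrite !ltr0_norm ?subr_lt0 // !opprB ltrD2l ltrN2.
  - by rewrite -opprB fba -mulrN opprB.
Qed.

Lemma convex_nonneg_chord (x y l : R) : 0 <= x -> 0 <= y -> 0 <= l -> l <= 1 ->
  f (x + l * (y - x)) - f x <= l * (f y - f x).
Proof.
move=> x0 y0 l0 l1; have := f_convex y0 x0 l0 l1.
have -> : l * y + (1 - l) * x = x + l * (y - x) by ring.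
by move=> fxy; rewrite lerBlDr; apply: (le_trans fxy); lra.
Qed.

Lemma convex_nonneg_secant_deriv (x y l : R) :
  0 <= x -> 0 <= y -> x != y -> 0 < l -> l <= 1 ->
  exists c, [/\ 0 <= c, `|c - x| < l * `|y - x| & df c * (y - x) <= f y - f x].
Proof.
move=> x0 y0 xy l0 l1; set w := x + l * (y - x).
have w0 : 0 <= w.
  have -> : w = (1 - l) * x + l * y by rewrite /w; ring.
  by rewrite addr_ge0 ?mulr_ge0 ?subr_ge0 // ltW.
have wx : w - x = l * (y - x) by rewrite /w; ring.
have [|c [c0 cx fwx]] := MVT_nonneg x0 w0.
  apply: contra_neq xy => xw; apply/eqP; move: wx.
  by rewrite -xw subrr => /esym/eqP; rewrite mulf_eq0 gt_eqF //= subr_eq0 eq_sym.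
exists c; split => //; first by rewrite wx normrM gtr0_norm in cx.
rewrite -(ler_pM2l l0) mulrCA -wx -fwx.
exact: convex_nonneg_chord (ltW l0) l1.
Qed.

Lemma convex_C1_subgradient (x y : R) : 0 <= x -> 0 <= y ->
  df x * (y - x) <= f y - f x.
Proof.
move=> x0 y0; have [->|xy] := eqVneq x y; first by rewrite !subrr mulr0.
have k0 : 0 < `|y - x| by rewrite normr_gt0 subr_eq0 eq_sym.
apply/ler_addgt0Pr => e e0.
have [d d0 near_x] :=
  within_continuous_dist_lt (proj1 (proj2 f_C1)) x0 (divr_gt0 e0 k0).
pose l := Num.min 1 (d / `|y - x|).
have l0 : 0 < l by rewrite lt_min ltr01 divr_gt0.
have l1 : l <= 1 by rewrite ge_min lexx.
have [c [c0 cx dc]] := convex_nonneg_secant_deriv x0 y0 xy l0 l1.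
have cxd : `|c - x| < d.
  by apply: lt_le_trans cx _; rewrite -ler_pdivlMr // ge_min lexx orbT.
have : `|(df c - df x) * (y - x)| < e.
  by rewrite normrM -ltr_pdivlMr // near_x.
rewrite ltr_norml mulrBl => /andP[? _]; lra.
Qed.
End ConvexC1.

Lemma continuous_shift_le (R : realType) (f g : R -> R) (a b d : R) :
  {within [set x | 0 <= x], continuous f} ->
  {within [set x | 0 <= x], continuous g} ->
  0 < d -> 0 <= a - d -> 0 <= b ->
  (forall e, 0 < e <= d -> f (a - e) <= g (b + e)) -> f a <= g b.
Proof.
move=> fc gc d0 ad0 b0 fg; apply/ler_addgt0Pr => eps eps0.
have eps20 : 0 < eps / 2 by rewrite divr_gt0.
have a0 : 0 <= a by lra.
have [d1 d10 near_a] := within_continuous_dist_lt fc a0 eps20.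
have [d2 d20 near_b] := within_continuous_dist_lt gc b0 eps20.
pose m := Num.min d (Num.min d1 d2).
have [md [md1 md2]] : [/\ m <= d, m <= d1 & m <= d2].
  by rewrite !ge_min !lexx !orbT.
have m0 : 0 < m by rewrite !lt_min d0 d10 d20.
have fa : `|f (a - m / 2) - f a| < eps / 2.
  apply: near_a; first by rewrite /=; lra.
  have -> : a - m / 2 - a = - (m / 2) by ring.
  by rewrite normrN gtr0_norm; lra.
have gb : `|g (b + m / 2) - g b| < eps / 2.
  apply: near_b; first by rewrite /=; lra.
  have -> : b + m / 2 - b = m / 2 by ring.
  by rewrite gtr0_norm; lra.
have m2d : 0 < m / 2 <= d by apply/andP; split; lra.
have := fg _ m2d; move: fa gb; rewrite !ltr_norml => /andP[? _] /andP[_ ?].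
lra.
Qed.

Section Allocation.
Variables (R : realType) (B S : finType) (E : B -> S -> bool).
Variables (x : B -> R) (z : B -> S -> R).
Hypothesis z_feasible : feasible E x z.

Lemma load_ge0 t : 0 <= load z t.
Proof. by apply: sumr_ge0 => i _; case: z_feasible. Qed.

Lemma le_load i t : z i t <= load z t.
Proof.
have [z_ge0 _] := z_feasible.
by rewrite /load (bigD1 i) //= lerDl sumr_ge0.
Qed.

Definition move_flow (i : B) (t s : S) (e : R) : B -> S -> R :=
  fun j u => if j == i
    then z j u + (if u == s then e else 0) - (if u == t then e else 0)
    else z j u.

Lemma load_move_flow i t s e u : load (move_flow i t s e) u =
  load z u + (if u == s then e else 0) - (if u == t then e else 0).
Proof.
rewrite /load /move_flow (bigD1 i) //= eqxx [in RHS](bigD1 i) //=.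
rewrite (eq_bigr (fun j => z j u)) => [|j /negbTE -> //].
by ring.
Qed.

Lemma feasible_move_flow i t s e : E i s -> 0 < e -> e <= z i t ->
  feasible E x (move_flow i t s e).
Proof.
have [z_ge0 [z_edge z_sum]] := z_feasible.
move=> Eis e0 ezt; split; [|split].
- move=> j u; rewrite /move_flow; case: eqVneq => [->|_]; last exact: z_ge0.
  have := z_ge0 i u; case: (eqVneq u t) => [->|_]; case: eqP => _; lra.
- move=> j u nEju; rewrite /move_flow z_edge //; case: eqVneq => [eji|_] //.
  subst j; have us : u != s by apply: contraNneq nEju => ->.
  have ut : u != t.
    apply: contraNneq nEju => eut; subst t.
    by apply: contraTT ezt => /z_edge ->; rewrite -ltNge.
  by rewrite (negbTE us) (negbTE ut) addr0 subr0.
- move=> j; rewrite /move_flow; case: eqVneq => [->|_]; last exact: z_sum.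
  by rewrite sumrB big_split /= z_sum -!big_mkcond !big_pred1_eq addrK.
Qed.

End Allocation.

Section MinCostFlow.
Variables (R : realType) (B S : finType) (E : B -> S -> bool).
Variables (C c : S -> R -> R).
Hypotheses (C_convex : forall t, convex_nonneg (C t))
  (C_C1 : forall t, C1_nonneg_with_deriv (C t) (c t)).

Lemma rprice_le (z : B -> S -> R) i t : E i t -> rprice E c z i <= c t (load z t).
Proof.
move=> Eit; rewrite /rprice; case: pickP => [t0 _|/(_ t)].
  exact: bigmin_le_cond.
by rewrite Eit.
Qed.

Variables (x : B -> R) (z : B -> S -> R).
Hypothesis z_opt : min_cost_flow E C x z.
Let z_feasible := proj1 z_opt.

(* Moving e units of buyer i from t to s cannot lower the cost, and by the
   subgradient inequality at the new loads it changes the cost by at most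
   e * (c_s(z_s + e) - c_t(z_t - e)). *)
Lemma min_cost_flow_shift_le i t s e : E i s -> s != t -> 0 < e -> e <= z i t ->
  c t (load z t - e) <= c s (load z s + e).
Proof.
move=> Eis st e0 ezt; set zt := load z t; set zs := load z s.
have := proj2 z_opt _ (feasible_move_flow z_feasible Eis e0 ezt).
rewrite -subr_ge0 /total_cost -sumrB (bigD1 s) //= (bigD1 t) 1?eq_sym //=.
rewrite big1 => [|u /andP[us ut]]; last first.
  by rewrite load_move_flow (negbTE us) (negbTE ut) addr0 subr0 subrr.
rewrite !load_move_flow !eqxx (negbTE st) eq_sym (negbTE st) -/zt -/zs.
rewrite !addr0 subr0 => cost.
have zs0 : 0 <= zs := load_ge0 z_feasible s.
have zte0 : 0 <= zt - e by rewrite subr_ge0 (le_trans ezt) ?(le_load z_feasible).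
have := convex_C1_subgradient (C_convex s) (C_C1 s) (addr_ge0 zs0 (ltW e0)) zs0.
have := convex_C1_subgradient (C_convex t) (C_C1 t) zte0 (load_ge0 z_feasible t).
have -> : zs - (zs + e) = - e by ring.
have -> : zt - (zt - e) = e by ring.
rewrite mulrN -/zt => subgrad_t subgrad_s.
rewrite -(ler_pM2r e0); lra.
Qed.

Lemma min_cost_flow_marginal_le i t s : 0 < z i t -> E i s ->
  c t (load z t) <= c s (load z s).
Proof.
move=> zit0 Eis; have [->|st] := eqVneq s t; first by [].
apply: (continuous_shift_le _ _ zit0).
- exact: (proj1 (proj2 (C_C1 t))).
- exact: (proj1 (proj2 (C_C1 s))).
- by rewrite subr_ge0 (le_load z_feasible).
- exact: (load_ge0 z_feasible).
- by move=> e /andP[e0 ezt]; exact: min_cost_flow_shift_le Eis st e0 ezt.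
Qed.

Lemma rprice_min_cost_flow i t : 0 < z i t -> rprice E c z i = c t (load z t).
Proof.
move=> zit0; have Eit : E i t.
  by apply: contraTT zit0 => /(proj1 (proj2 z_feasible)) ->; rewrite ltxx.
apply/le_anti; rewrite rprice_le //= /rprice; case: pickP => [t0 Et0|/(_ t)].
  by apply: le_bigmin => [|s Eis]; apply: min_cost_flow_marginal_le zit0 _.
by rewrite Eit.
Qed.

Lemma rprice_demand_le (y : B -> R) (w : B -> S -> R) i : feasible E y w ->
  rprice E c z i * (y i - x i) <= \sum_t c t (load z t) * (w i t - z i t).
Proof.
have [z_ge0 [z_edge z_sum]] := z_feasible.
move=> [w_ge0 [w_edge w_sum]]; rewrite -w_sum -z_sum -sumrB mulr_sumr.
apply: ler_sum => t _; rewrite !mulrBr lerB //.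
- have [Eit|nEit] := boolP (E i t); last by rewrite w_edge // !mulr0.
  by rewrite ler_wpM2r ?rprice_le.
- have := z_ge0 i t; rewrite le_eqVlt => /predU1P[<-|zit0]; first by rewrite !mulr0.
  by rewrite (rprice_min_cost_flow zit0).
Qed.
End MinCostFlow.

Theorem lemma13 (R : realType) (B S : finType) (E : B -> S -> bool)
    (C c : S -> R -> R)
    (hconv : forall t, convex_nonneg (C t))
    (hC1 : forall t, C1_nonneg_with_deriv (C t) (c t))
    (x1 x2 : B -> R) (z1 z2 : B -> S -> R)
    (hx1 : forall i, 0 <= x1 i) (hx12 : forall i, x1 i <= x2 i)
    (hz1 : min_cost_flow E C x1 z1) (hz2 : min_cost_flow E C x2 z2) :
  \sum_(t : S) (C t (load z2 t) - C t (load z1 t))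
    >= \sum_(i : B) rprice E c z1 i * (x2 i - x1 i).
Proof.
have [z1_feasible _] := hz1; have [z2_feasible _] := hz2.
apply: (@le_trans _ _ (\sum_t c t (load z1 t) * (load z2 t - load z1 t))).
  have -> : \sum_t c t (load z1 t) * (load z2 t - load z1 t) =
      \sum_i \sum_t c t (load z1 t) * (z2 i t - z1 i t).
    by rewrite exchange_big; apply: eq_bigr => t _; rewrite -mulr_sumr sumrB.
  by apply: ler_sum => i _; apply: (rprice_demand_le hconv hC1 hz1 i z2_feasible).
apply: ler_sum => t _.
apply: (convex_C1_subgradient (hconv t) (hC1 t) (load_ge0 z1_feasible t)
  (load_ge0 z2_feasible t)).
Qed.
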